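(* Consider the setting and Algorithm DRDGA in the context, under Assumptions A1 and A2, with a positive non-increasing stepsize sequence $\beta[t]\to0$, and let $D$ be a constant with $\sup_t\|\lambda_i[t]\|\le D$ for all $i$. Let $\overline{\theta}[t]=\frac1m\sum_{i=1}^m\theta_i[t]$. Then for every $\lambda\in\mathbb{R}^p$, every $\mathbf{x}\in\mathbf{X}_1\times\cdots\times\mathbf{X}_m$ and every $t>0$, $$\|\overline{\theta}[t+1]-\lambda\|^2\le\|\overline{\theta}[t]-\lambda\|^2+\frac{4\beta[t+1]}{m}\sum_{j=1}^m(G_j+\gamma_jD)\|\lambda_j[t+1]-\overline{\theta}[t]\|-\frac{\beta[t+1]}{m}\sum_{j=1}^m\gamma_j\|\lambda_j[t+1]-\lambda\|^2+\frac{\beta^2[t+1]}{m}\sum_{j=1}^m(G_j+\gamma_jD)^2-\frac{2\beta[t+1]}{m}\big(\mathcal{L}(\mathbf{x}[t+1],\lambda)-\mathcal{L}(\mathbf{x},\overline{\theta}[t])\big),$$ where $\mathbf{x}[t+1]=(\mathbf{x}_1[t+1],\dots,\mathbf{x}_m[t+1])$.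
   Context: Problem: $m$ agents; agent $i$ has $f_i:\mathbb{R}^{n_i}\to\mathbb{R}$, a set $\mathbf{X}_i\subseteq\mathbb{R}^{n_i}$, $A_i\in\mathbb{R}^{p\times n_i}$, $\mathbf{b}_i\in\mathbb{R}^p$; the problem is $\min_{\mathbf{x}_i\in\mathbf{X}_i}\sum_i f_i(\mathbf{x}_i)$ s.t. $\sum_i(A_i\mathbf{x}_i-\mathbf{b}_i)=0$. Regularization parameters $\gamma_i>0$; $\mathcal{L}_i(\mathbf{x}_i,\lambda)=f_i(\mathbf{x}_i)+\lambda^\top(A_i\mathbf{x}_i-\mathbf{b}_i)-\frac{\gamma_i}{2}\lambda^\top\lambda$ and $\mathcal{L}(\mathbf{x},\lambda)=\sum_{i=1}^m\mathcal{L}_i(\mathbf{x}_i,\lambda)$. Assumption A1: each $f_i$ is $\tau_i$-strongly convex ($\tau_i>0$), each $\mathbf{X}_i$ nonempty, convex, compact. $G_i>0$ are constants with $\|A_i\mathbf{x}_i-\mathbf{b}_i\|\le G_i$ for all $\mathbf{x}_i\in\mathbf{X}_i$. Network: directed graphs $\mathcal{G}[t]=(\{1,\dots,m\},\mathcal{E}[t])$; $\mathcal{N}_i^{out}[t]=\{j:(i,j)\in\mathcal{E}[t]\}\cup\{i\}$, $\mathcal{N}_i^{in}[t]=\{j:(j,i)\in\mathcal{E}[t]\}\cup\{i\}$, $d_i[t]=|\mathcal{N}_i^{out}[t]|$; $(W[t])_{ij}=1/d_j[t]$ if $j\in\mathcal{N}_i^{in}[t]$, else $0$. Assumption A2: each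 agent knows $d_i[t]$; there is an integer $B_c>0$ such that for every $k\ge0$ the graph with edge set $\bigcup_{l=kB_c}^{(k+1)B_c-1}\mathcal{E}[l]$ is strongly connected. Algorithm DRDGA: $\theta_i[0]\in\mathbb{R}^p$ given, $\rho_i[0]=1$; for $t\ge0$: $\mathbf{u}_i[t+1]=\sum_j (W[t])_{ij}\theta_j[t]$; $\rho_i[t+1]=\sum_j (W[t])_{ij}\rho_j[t]$; $\lambda_i[t+1]=\mathbf{u}_i[t+1]/\rho_i[t+1]$; $\mathbf{x}_i[t+1]=\arg\min_{\mathbf{x}_i\in\mathbf{X}_i}\mathcal{L}_i(\mathbf{x}_i,\lambda_i[t+1])$; $\theta_i[t+1]=\mathbf{u}_i[t+1]+\beta[t+1](A_i\mathbf{x}_i[t+1]-\mathbf{b}_i-\gamma_i\lambda_i[t+1])$. *)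

From Stdlib Require Import Reals.
From mathcomp Require Import all_boot.
Set Implicit Arguments. Unset Strict Implicit. Unset Printing Implicit Defensive.
Local Open Scope R_scope.

Definition vec (n : nat) := 'I_n -> R.

Definition vsum (n : nat) (F : 'I_n -> R) : R := \big[Rplus/0]_(k < n) F k.

Definition vadd n (u v : vec n) : vec n := fun k => u k + v k.
Definition vsub n (u v : vec n) : vec n := fun k => u k - v k.
Definition vscale n (a : R) (u : vec n) : vec n := fun k => a * u k.
Definition dot n (u v : vec n) : R := vsum (fun k => u k * v k).
Definition norm n (u : vec n) : R := sqrt (dot u u).

Definition mat (p q : nat) := 'I_p -> 'I_q -> R.
Definition matvec p q (A : mat p q) (x : vec q) : vec p :=
  fun r => vsum (fun k => A r k * x k).

Definition strongly_convex n (f : vec n -> R) (tau : R) : Prop :=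
  forall (x y : vec n) (a : R), 0 <= a <= 1 ->
    f (vadd (vscale a x) (vscale (1 - a) y))
    <= a * f x + (1 - a) * f y - tau / 2 * a * (1 - a) * (norm (vsub x y)) ^ 2.

Definition convex_set n (X : vec n -> Prop) : Prop :=
  forall (x y : vec n) (a : R), X x -> X y -> 0 <= a <= 1 ->
    X (vadd (vscale a x) (vscale (1 - a) y)).

Definition vconv n (xs : nat -> vec n) (y : vec n) : Prop :=
  Un_cv (fun k => norm (vsub (xs k) y)) 0.

(* (sequential) compactness: every sequence in X has a subsequence
   converging to a point of X (equivalent to compactness in R^n) *)
Definition compact_set n (X : vec n -> Prop) : Prop :=
  forall xs : nat -> vec n, (forall k, X (xs k)) ->
    exists (phi : nat -> nat) (y : vec n),
      (forall k, (phi k < phi k.+1)%N) /\ X y /\ vconv (fun k => xs (phi k)) y.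

Definition Lag_i p q (f : vec q -> R) (A : mat p q) (b : vec p) (gamma : R)
    (x : vec q) (lam : vec p) : R :=
  f x + dot (vsub (matvec A x) b) lam - gamma / 2 * dot lam lam.

Definition Lag m p (n : 'I_m -> nat) (f : forall i, vec (n i) -> R)
    (A : forall i, mat p (n i)) (b : 'I_m -> vec p) (gamma : 'I_m -> R)
    (x : forall i, vec (n i)) (lam : vec p) : R :=
  \big[Rplus/0]_(i < m) Lag_i (f i) (A i) (b i) (gamma i) (x i) lam.

(* network: E t i j <-> (i,j) is an edge of G[t] *)
Definition Nout m (E : nat -> 'I_m -> 'I_m -> bool) (t : nat) (i : 'I_m)
  : {set 'I_m} := [set j | E t i j] :|: [set i].
Definition Nin m (E : nat -> 'I_m -> 'I_m -> bool) (t : nat) (i : 'I_m)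
  : {set 'I_m} := [set j | E t j i] :|: [set i].
Definition deg m (E : nat -> 'I_m -> 'I_m -> bool) (t : nat) (i : 'I_m) : nat :=
  #|Nout E t i|.
Definition Wmat m (E : nat -> 'I_m -> 'I_m -> bool) (t : nat) (i j : 'I_m) : R :=
  if j \in Nin E t i then 1 / INR (deg E t j) else 0.

(* Assumption A2 (connectivity part): every window union graph is strongly connected *)
Definition B_strongly_connected m (E : nat -> 'I_m -> 'I_m -> bool) (Bc : nat)
  : Prop :=
  (0 < Bc)%N /\
  forall (k : nat) (a c : 'I_m),
    connect (fun u v => [exists l : 'I_Bc, E (k * Bc + l)%N u v]) a c.

Definition vavg m p (theta : 'I_m -> vec p) : vec p :=
  fun r => / INR m * \big[Rplus/0]_(i < m) theta i r.

(* Column stochasticity of [W[t]] preserves the totals of the [theta]'s and of the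
   push-sum weights [rho], so [thbar[t] = (1/m) sum_i rho_i[t+1] lam_i[t+1]] is a convex
   combination of the [lam_i[t+1]] (hence [|thbar[t]| <= D]) and
   [thbar[t+1] = thbar[t] + (beta[t+1]/m) sum_i g_i], where [g_i] is the gradient of the
   concave quadratic [L_i(x_i[t+1], .)] at [lam_i[t+1]].  Expanding the square,
   [|sum_i g_i|^2 <= m sum_i (G_i + gamma_i D)^2], and each [<g_i, thbar[t] - lam>] is
   bounded by exact second-order expansion of [L_i(x_i[t+1], .)], minimality of
   [x_i[t+1]] for [L_i(., lam_i[t+1])], and the [(G_i + gamma_i D)]-Lipschitz continuity of
   [L_i(x_i, .)] on the [D]-ball; the last two each cost [(G_i + gamma_i D) |lam_i[t+1] - thbar[t]|]. *)

From HB Require Import structures.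
From Stdlib Require Import Reals Lra Psatz FunctionalExtensionality.
From mathcomp Require Import all_boot.
Set Implicit Arguments.
Unset Strict Implicit.
Local Open Scope R_scope.

HB.instance Definition _ := Monoid.isComLaw.Build R 0 Rplus
  (fun x y z => esym (Rplus_assoc x y z)) Rplus_comm Rplus_0_l.

Lemma big_Rmult_l (I : Type) (r : seq I) (P : pred I) (F : I -> R) a :
  \big[Rplus/0]_(i <- r | P i) (a * F i) = a * \big[Rplus/0]_(i <- r | P i) F i.
Proof. by apply: (big_rec2 (fun y1 y2 => y1 = a * y2)) => [|i y1 y2 _ ->]; ring. Qed.

Lemma big_Rmult_r (I : Type) (r : seq I) (P : pred I) (F : I -> R) a :
  \big[Rplus/0]_(i <- r | P i) (F i * a) = (\big[Rplus/0]_(i <- r | P i) F i) * a.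
Proof. by apply: (big_rec2 (fun y1 y2 => y1 = y2 * a)) => [|i y1 y2 _ ->]; ring. Qed.

Lemma big_Rplus (I : Type) (r : seq I) (P : pred I) (F G : I -> R) :
  \big[Rplus/0]_(i <- r | P i) (F i + G i) =
  \big[Rplus/0]_(i <- r | P i) F i + \big[Rplus/0]_(i <- r | P i) G i.
Proof.
by apply: (big_rec3 (fun y1 y2 y3 => y1 = y2 + y3)) => [|i y1 y2 y3 _ ->]; ring.
Qed.

Lemma big_Rminus (I : Type) (r : seq I) (P : pred I) (F G : I -> R) :
  \big[Rplus/0]_(i <- r | P i) (F i - G i) =
  \big[Rplus/0]_(i <- r | P i) F i - \big[Rplus/0]_(i <- r | P i) G i.
Proof.
by apply: (big_rec3 (fun y1 y2 y3 => y1 = y2 - y3)) => [|i y1 y2 y3 _ ->]; ring.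
Qed.

Lemma big_Rle (I : Type) (r : seq I) (P : pred I) (F G : I -> R) :
  (forall i, P i -> F i <= G i) ->
  \big[Rplus/0]_(i <- r | P i) F i <= \big[Rplus/0]_(i <- r | P i) G i.
Proof. by move=> FG; apply: (big_ind2 Rle) => // *; lra. Qed.

Lemma big_Rge0 (I : Type) (r : seq I) (P : pred I) (F : I -> R) :
  (forall i, P i -> 0 <= F i) -> 0 <= \big[Rplus/0]_(i <- r | P i) F i.
Proof. by move=> F0; apply: big_ind => // *; lra. Qed.

Lemma iter_Rplus k c : iter k (Rplus c) 0 = INR k * c.
Proof.
elim: k => [|k IH]; first by rewrite /=; ring.
by rewrite iterS IH S_INR; ring.
Qed.

Section Euclidean.

Variable n : nat.
Implicit Types u v w : vec n.

Lemma dot_comm u v : dot u v = dot v u.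
Proof. by apply: eq_bigr => k _; ring. Qed.

Lemma dot_addl u v w : dot (vadd u v) w = dot u w + dot v w.
Proof. by rewrite /dot /vsum -big_Rplus; apply: eq_bigr => k _; rewrite /vadd; ring. Qed.

Lemma dot_subl u v w : dot (vsub u v) w = dot u w - dot v w.
Proof. by rewrite /dot /vsum -big_Rminus; apply: eq_bigr => k _; rewrite /vsub; ring. Qed.

Lemma dot_scalel a u w : dot (vscale a u) w = a * dot u w.
Proof. by rewrite /dot /vsum -big_Rmult_l; apply: eq_bigr => k _; rewrite /vscale; ring. Qed.

Lemma dot_addr u v w : dot w (vadd u v) = dot w u + dot w v.
Proof. by rewrite dot_comm dot_addl !(dot_comm w). Qed.

Lemma dot_subr u v w : dot w (vsub u v) = dot w u - dot w v.
Proof. by rewrite dot_comm dot_subl !(dot_comm w). Qed.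

Lemma dot_scaler a u w : dot w (vscale a u) = a * dot w u.
Proof. by rewrite dot_comm dot_scalel dot_comm. Qed.

Lemma dot_self_ge0 u : 0 <= dot u u.
Proof. by apply: big_Rge0 => k _; nra. Qed.

Lemma norm_ge0 u : 0 <= norm u.
Proof. exact: sqrt_pos. Qed.

Lemma norm_sq u : norm u ^ 2 = dot u u.
Proof. exact/pow2_sqrt/dot_self_ge0. Qed.

Lemma norm_le_of_sq u K : 0 <= K -> norm u ^ 2 <= K ^ 2 -> norm u <= K.
Proof. by have := norm_ge0 u; nra. Qed.

Lemma dot_sq_le u v : dot u v ^ 2 <= dot u u * dot v v.
Proof.
set a := dot u u; set b := dot v v; set c := dot u v.
have a0 : 0 <= a := dot_self_ge0 u; have b0 : 0 <= b := dot_self_ge0 v.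
have comb_ge0 s r : 0 <= s ^ 2 * a - 2 * s * r * c + r ^ 2 * b.
  have := dot_self_ge0 (vsub (vscale s u) (vscale r v)).
  by rewrite !(dot_subl, dot_subr, dot_scalel, dot_scaler) (dot_comm v u) -/a -/b -/c; lra.
(* [comb_ge0 b c] is [b (a b - c^2) >= 0] and [comb_ge0 c a] is [a (a b - c^2) >= 0]. *)
have [b_gt0 | b_eq0] := Rle_lt_or_eq_dec _ _ b0; first by have := comb_ge0 b c; nra.
have [a_gt0 | a_eq0] := Rle_lt_or_eq_dec _ _ a0; first by have := comb_ge0 c a; nra.
by have := comb_ge0 1 1; have := comb_ge0 1 (-1); rewrite -b_eq0 -a_eq0; nra.
Qed.

Lemma dot_le_norm u v : dot u v <= norm u * norm v.
Proof.
have := dot_sq_le u v; rewrite -!norm_sq.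
have := norm_ge0 u; have := norm_ge0 v; have := Rmult_le_pos _ _ (norm_ge0 u) (norm_ge0 v).
nra.
Qed.

Lemma norm_scale a u : norm (vscale a u) = Rabs a * norm u.
Proof.
by rewrite /norm dot_scalel dot_scaler -Rmult_assoc sqrt_mult ?sqrt_Rsqr_abs //;
  [exact: Rle_0_sqr | exact: dot_self_ge0].
Qed.

Lemma norm_sub_le u v : norm (vsub u v) <= norm u + norm v.
Proof.
apply: norm_le_of_sq; first by have := norm_ge0 u; have := norm_ge0 v; lra.
rewrite norm_sq !(dot_subl, dot_subr) (dot_comm v u) -!norm_sq.
have := dot_le_norm u (vscale (-1) v); rewrite dot_scaler norm_scale Rabs_Ropp Rabs_R1.
nra.
Qed.

Lemma norm_subC u v : norm (vsub u v) = norm (vsub v u).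
Proof. by rewrite /norm !(dot_subl, dot_subr) (dot_comm u v); congr sqrt; ring. Qed.

Lemma vsub_vaddl u v w : vsub (vadd u v) w = vadd (vsub u w) v.
Proof. by apply: functional_extensionality => k; rewrite /vsub /vadd; ring. Qed.

Lemma norm_add_scale_sq_le u v c a K :
  0 <= c -> dot v u <= a -> norm v ^ 2 <= K ->
  norm (vadd u (vscale c v)) ^ 2 <= norm u ^ 2 + 2 * c * a + c ^ 2 * K.
Proof.
move=> c_ge0 vu_le v_le; rewrite !norm_sq in v_le *.
rewrite !(dot_addl, dot_addr, dot_scalel, dot_scaler) (dot_comm u v).
have := Rmult_le_compat_l _ _ _ c_ge0 vu_le.
have := Rmult_le_compat_l _ _ _ (pow2_ge_0 c) v_le.
lra.
Qed.

End Euclidean.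

Definition vbig m q (v : 'I_m -> vec q) : vec q := fun r => \big[Rplus/0]_(i < m) v i r.

Section VectorSums.

Variables m q : nat.
Implicit Types (v : 'I_m -> vec q) (w : vec q).

Lemma dot_vbigl v w : dot (vbig v) w = \big[Rplus/0]_(i < m) dot (v i) w.
Proof.
rewrite /dot /vsum /vbig.
under eq_bigr do rewrite -big_Rmult_r.
by rewrite exchange_big.
Qed.

Lemma norm_vbig_le v : norm (vbig v) <= \big[Rplus/0]_(i < m) norm (v i).
Proof.
have K0 : 0 <= \big[Rplus/0]_(i < m) norm (v i) by apply: big_Rge0 => i _; exact: norm_ge0.
have : norm (vbig v) ^ 2 <= \big[Rplus/0]_(i < m) norm (v i) * norm (vbig v).
  by rewrite {1}norm_sq dot_vbigl -big_Rmult_r; apply: big_Rle => i _; exact: dot_le_norm.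
by have := norm_ge0 (vbig v); nra.
Qed.

Lemma norm_convex_comb_le (c : 'I_m -> R) v D :
  (forall i, 0 <= c i) -> \big[Rplus/0]_(i < m) c i = 1 -> (forall i, norm (v i) <= D) ->
  norm (vbig (fun i => vscale (c i) (v i))) <= D.
Proof.
move=> c0 c1 vD; apply: Rle_trans (norm_vbig_le _) _.
rewrite -[D]Rmult_1_l -c1 -big_Rmult_r; apply: big_Rle => i _.
by rewrite norm_scale Rabs_pos_eq //; apply: Rmult_le_compat_l.
Qed.

Lemma sqr_big_le (a : 'I_m -> R) :
  (\big[Rplus/0]_(i < m) a i) ^ 2 <= INR m * \big[Rplus/0]_(i < m) a i ^ 2.
Proof.
have := dot_sq_le (a : vec m) (fun _ => 1).
rewrite /dot /vsum big_const_ord iter_Rplus (eq_bigr a) => [|i _]; last exact: Rmult_1_r.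
have -> : \big[Rplus/0]_(i < m) (a i * a i) = \big[Rplus/0]_(i < m) a i ^ 2.
  by apply: eq_bigr => i _; ring.
by move=> h; apply: Rle_trans h _; right; ring.
Qed.

Lemma norm_vbig_sq_le v :
  norm (vbig v) ^ 2 <= INR m * \big[Rplus/0]_(i < m) norm (v i) ^ 2.
Proof.
apply: Rle_trans (sqr_big_le _); apply: pow_incr; split; first exact: norm_ge0.
exact: norm_vbig_le.
Qed.

End VectorSums.

Section Network.

Variables (m : nat) (E : nat -> 'I_m -> 'I_m -> bool).

Lemma deg_gt0 t j : 0 < INR (deg E t j).
Proof.
apply/lt_0_INR/ltP/card_gt0P; exists j.
by rewrite /Nout !inE eqxx orbT.
Qed.

Lemma Wmat_ge0 t i j : 0 <= Wmat E t i j.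
Proof.
rewrite /Wmat; case: ifP => _; last exact: Rle_refl.
exact/Rlt_le/Rdiv_lt_0_compat/deg_gt0/Rlt_0_1.
Qed.

Lemma Wmat_diag_gt0 t i : 0 < Wmat E t i i.
Proof. by rewrite /Wmat /Nin !inE eqxx orbT; exact/Rdiv_lt_0_compat/deg_gt0/Rlt_0_1. Qed.

(* Column [j] of [W[t]] spreads [1 / d_j[t]] evenly over the out-neighbours of [j]. *)
Lemma Wmat_col_sum t j : \big[Rplus/0]_(i < m) Wmat E t i j = 1.
Proof.
rewrite (eq_bigr (fun i => if i \in Nout E t j then 1 / INR (deg E t j) else 0)).
  rewrite -big_mkcond big_const iter_Rplus.
  by have := deg_gt0 t j; rewrite /deg => ?; field; lra.
by move=> i _; rewrite /Wmat /Nin /Nout !inE eq_sym.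
Qed.

Lemma big_Wmat_mix t (y : 'I_m -> R) :
  \big[Rplus/0]_(i < m) \big[Rplus/0]_(j < m) (Wmat E t i j * y j) =
  \big[Rplus/0]_(j < m) y j.
Proof.
rewrite exchange_big; apply: eq_bigr => j _.
by rewrite big_Rmult_r Wmat_col_sum Rmult_1_l.
Qed.

Variable rho : 'I_m -> nat -> R.
Hypothesis rho0 : forall i, rho i 0%N = 1.
Hypothesis rhoS : forall i t, rho i t.+1 = \big[Rplus/0]_(j < m) (Wmat E t i j * rho j t).

Lemma rho_sum t : \big[Rplus/0]_(i < m) rho i t = INR m.
Proof.
elim: t => [|t IH].
  by rewrite (eq_bigr (fun _ => 1)) => [|i _]; [rewrite big_const_ord iter_Rplus Rmult_1_r | exact: rho0].
by rewrite (eq_bigr (fun i => \big[Rplus/0]_(j < m) (Wmat E t i j * rho j t))) ?big_Wmat_mix.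
Qed.

Lemma rho_gt0 t i : 0 < rho i t.
Proof.
elim: t i => [|t IH] i; first by rewrite rho0; exact: Rlt_0_1.
rewrite rhoS (bigD1 i) //=; apply: Rplus_lt_le_0_compat.
  exact: Rmult_lt_0_compat (Wmat_diag_gt0 t i) (IH i).
by apply: big_Rge0 => j _; apply: Rmult_le_pos (Wmat_ge0 t i j) (Rlt_le _ _ (IH j)).
Qed.

End Network.

Section Agent.

Variables (p q : nat) (f : vec q -> R) (A : mat p q) (b : vec p) (gamma : R).
Hypothesis gamma_ge0 : 0 <= gamma.

Local Notation L := (Lag_i f A b gamma).

Definition dual_grad (x : vec q) (lam : vec p) : vec p :=
  vsub (vsub (matvec A x) b) (vscale gamma lam).

(* [L x] is a concave quadratic in the multiplier, so its second-order Taylor expansion is exact. *)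
Lemma Lag_i_sub x lam mu :
  L x mu - L x lam =
  dot (dual_grad x lam) (vsub mu lam) - gamma / 2 * norm (vsub mu lam) ^ 2.
Proof.
rewrite /Lag_i /dual_grad norm_sq !(dot_subl, dot_subr, dot_scalel, dot_scaler).
rewrite (dot_comm mu lam); lra.
Qed.

Lemma norm_dual_grad_le x lam G D :
  norm (vsub (matvec A x) b) <= G -> norm lam <= D ->
  norm (dual_grad x lam) <= G + gamma * D.
Proof.
move=> xG lamD; apply: Rle_trans (norm_sub_le _ _) _.
rewrite norm_scale Rabs_pos_eq //.
exact/Rplus_le_compat/Rmult_le_compat_l.
Qed.

Lemma dual_grad_inner_le x x' lam mu l G D :
  norm (vsub (matvec A x) b) <= G -> norm (vsub (matvec A x') b) <= G ->
  norm lam <= D -> norm mu <= D -> L x' lam <= L x lam ->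
  dot (dual_grad x' lam) (vsub mu l) <=
  2 * ((G + gamma * D) * norm (vsub lam mu)) + (L x mu - L x' l)
  - / 2 * (gamma * norm (vsub lam l) ^ 2).
Proof.
move=> xG x'G lamD muD x'_min.
have dist_ge0 := norm_ge0 (vsub lam mu).
have Lag_lipschitz : L x lam - L x mu <= (G + gamma * D) * norm (vsub lam mu).
  rewrite Lag_i_sub.
  have := dot_le_norm (dual_grad x mu) (vsub lam mu).
  have := norm_dual_grad_le xG muD.
  have := Rmult_le_pos _ _ gamma_ge0 (pow2_ge_0 (norm (vsub lam mu))).
  nra.
have drift : dot (dual_grad x' lam) (vsub mu lam) <= (G + gamma * D) * norm (vsub lam mu).
  have := dot_le_norm (dual_grad x' lam) (vsub mu lam).
  have := norm_dual_grad_le x'G lamD.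
  rewrite norm_subC; nra.
have := Lag_i_sub x' lam l; rewrite norm_subC.
have -> : dot (dual_grad x' lam) (vsub mu l) =
          dot (dual_grad x' lam) (vsub mu lam) - dot (dual_grad x' lam) (vsub l lam).
  by rewrite !dot_subr; ring.
lra.
Qed.

End Agent.

Section DRDGA.

Variables (m p : nat) (E : nat -> 'I_m -> 'I_m -> bool) (beta : nat -> R).
Variables (theta u lam dir : 'I_m -> nat -> vec p) (rho : 'I_m -> nat -> R).
Hypothesis m_gt0 : (0 < m)%N.
Hypothesis rho0 : forall i, rho i 0%N = 1.
Hypothesis rhoS : forall i t, rho i t.+1 = \big[Rplus/0]_(j < m) (Wmat E t i j * rho j t).
Hypothesis uS : forall i t,
  u i t.+1 = (fun r => \big[Rplus/0]_(j < m) (Wmat E t i j * theta j t r)).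
Hypothesis lamS : forall i t, lam i t.+1 = vscale (/ rho i t.+1) (u i t.+1).
Hypothesis thetaS : forall i t,
  theta i t.+1 = vadd (u i t.+1) (vscale (beta t.+1) (dir i t.+1)).

Local Notation thbar t := (vavg (fun i => theta i t)).

Let INR_m_gt0 : 0 < INR m. Proof. exact/lt_0_INR/ltP. Qed.

Lemma big_u_mass t r :
  \big[Rplus/0]_(i < m) u i t.+1 r = \big[Rplus/0]_(j < m) theta j t r.
Proof. by rewrite -(big_Wmat_mix E t (fun j => theta j t r)); apply: eq_bigr => i _; rewrite uS. Qed.

Lemma thbar_convex_comb t :
  thbar t = vbig (fun i => vscale (rho i t.+1 / INR m) (lam i t.+1)).
Proof.
apply: functional_extensionality => r.
rewrite /vavg -big_u_mass /vbig /vscale -big_Rmult_l; apply: eq_bigr => i _.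
rewrite lamS /vscale; have := rho_gt0 rho0 rhoS t.+1 i; move=> ?; field; lra.
Qed.

Lemma norm_thbar_le t D : (forall i, norm (lam i t.+1) <= D) -> norm (thbar t) <= D.
Proof.
move=> lamD; rewrite thbar_convex_comb; apply: norm_convex_comb_le => // [i|].
  exact/Rlt_le/Rdiv_lt_0_compat/INR_m_gt0/(rho_gt0 rho0 rhoS).
rewrite /Rdiv big_Rmult_r (rho_sum rho0 rhoS); field; lra.
Qed.

Lemma thbar_step t :
  thbar t.+1 = vadd (thbar t) (vscale (beta t.+1 / INR m) (vbig (fun i => dir i t.+1))).
Proof.
apply: functional_extensionality => r.
rewrite /vavg /vadd /vscale /vbig.
rewrite (eq_bigr (fun i => u i t.+1 r + beta t.+1 * dir i t.+1 r)) => [|i _]; last by rewrite thetaS.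
rewrite big_Rplus big_Rmult_l big_u_mass.
set sdir := \big[Rplus/0]_(i < m) dir i t.+1 r.
by field; lra.
Qed.

End DRDGA.
Theorem lemma2
  (m p : nat) (n : 'I_m -> nat)
  (f : forall i, vec (n i) -> R) (X : forall i, vec (n i) -> Prop)
  (A : forall i, mat p (n i)) (b : 'I_m -> vec p)
  (gamma tau G : 'I_m -> R)
  (E : nat -> 'I_m -> 'I_m -> bool) (Bc : nat)
  (beta : nat -> R) (D : R)
  (theta u lam : 'I_m -> nat -> vec p) (rho : 'I_m -> nat -> R)
  (xs : forall i, nat -> vec (n i))
  (* problem data *)
  (Hm : (0 < m)%N)
  (Hgamma : forall i, 0 < gamma i)
  (* Assumption A1 *)
  (Htau : forall i, 0 < tau i)
  (Hf : forall i, strongly_convex (f i) (tau i))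
  (HXne : forall i, exists x0, X i x0)
  (HXconv : forall i, convex_set (X i))
  (HXcomp : forall i, compact_set (X i))
  (HGpos : forall i, 0 < G i)
  (HG : forall i x, X i x -> norm (vsub (matvec (A i) x) (b i)) <= G i)
  (* Assumption A2 *)
  (HA2 : B_strongly_connected E Bc)
  (* stepsizes *)
  (Hbeta_pos : forall t, 0 < beta t)
  (Hbeta_noninc : forall t, beta t.+1 <= beta t)
  (Hbeta_lim : Un_cv beta 0)
  (* Algorithm DRDGA *)
  (Hrho0 : forall i, rho i 0%N = 1)
  (Hu : forall i t, u i t.+1 = (fun r => \big[Rplus/0]_(j < m) (Wmat E t i j * theta j t r)))
  (Hrho : forall i t, rho i t.+1 = \big[Rplus/0]_(j < m) (Wmat E t i j * rho j t))
  (Hlam : forall i t, lam i t.+1 = vscale (/ rho i t.+1) (u i t.+1))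
  (Hxmem : forall i t, X i (xs i t.+1))
  (Hxmin : forall i t y, X i y ->
     Lag_i (f i) (A i) (b i) (gamma i) (xs i t.+1) (lam i t.+1)
     <= Lag_i (f i) (A i) (b i) (gamma i) y (lam i t.+1))
  (Htheta : forall i t, theta i t.+1 =
     vadd (u i t.+1)
       (vscale (beta t.+1)
          (vsub (vsub (matvec (A i) (xs i t.+1)) (b i)) (vscale (gamma i) (lam i t.+1)))))
  (* dual iterates bounded by D *)
  (HD : forall i t, (0 < t)%N -> norm (lam i t) <= D) :
  let thbar := fun t => vavg (fun i => theta i t) in
  forall (l : vec p) (x : forall i, vec (n i)), (forall i, X i (x i)) ->
  forall t : nat, (0 < t)%N ->
    (norm (vsub (thbar t.+1) l)) ^ 2
    <= (norm (vsub (thbar t) l)) ^ 2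
       + 4 * beta t.+1 / INR m *
           \big[Rplus/0]_(j < m) ((G j + gamma j * D) * norm (vsub (lam j t.+1) (thbar t)))
       - beta t.+1 / INR m *
           \big[Rplus/0]_(j < m) (gamma j * (norm (vsub (lam j t.+1) l)) ^ 2)
       + (beta t.+1) ^ 2 / INR m *
           \big[Rplus/0]_(j < m) ((G j + gamma j * D) ^ 2)
       - 2 * beta t.+1 / INR m *
           (Lag f A b gamma (fun i => xs i t.+1) l - Lag f A b gamma x (thbar t)).
Proof.
move=> thbar l x x_in t _; rewrite {}/thbar.
pose dir i s := dual_grad (A i) (b i) (gamma i) (xs i s) (lam i s).
have gamma_ge0 i := Rlt_le _ _ (Hgamma i).
have INR_m_gt0 : 0 < INR m by exact/lt_0_INR/ltP.
set th := vavg (fun i => theta i t).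
set S := vbig (fun i => dir i t.+1).
have th_le : norm th <= D by apply: (norm_thbar_le Hm Hrho0 Hrho Hu Hlam) => i; exact: HD.
have inner : dot S (vsub th l) <=
    \big[Rplus/0]_(j < m) (2 * ((G j + gamma j * D) * norm (vsub (lam j t.+1) th))
      + (Lag_i (f j) (A j) (b j) (gamma j) (x j) th
         - Lag_i (f j) (A j) (b j) (gamma j) (xs j t.+1) l)
      - / 2 * (gamma j * norm (vsub (lam j t.+1) l) ^ 2)).
  rewrite dot_vbigl; apply: big_Rle => j _.
  by apply: dual_grad_inner_le; auto.
have S_sq : norm S ^ 2 <= INR m * \big[Rplus/0]_(j < m) (G j + gamma j * D) ^ 2.
  apply: Rle_trans (norm_vbig_sq_le _) _; apply/Rmult_le_compat_l/big_Rle => [|j _].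
    exact: pos_INR.
  by apply: pow_incr; split; [exact: norm_ge0 | apply: norm_dual_grad_le; auto].
have step_ge0 : 0 <= beta t.+1 / INR m.
  exact/Rlt_le/Rdiv_lt_0_compat/INR_m_gt0/Hbeta_pos.
rewrite (thbar_step (dir := dir) Hm Hu Htheta) vsub_vaddl.
apply: Rle_trans (norm_add_scale_sq_le step_ge0 inner S_sq) _; right.
rewrite /Lag big_Rminus big_Rplus big_Rminus !big_Rmult_l.
(* The split sums are elaborated over a different (convertible) index type than those of
   the goal; naming them makes [field] see them as the same atoms. *)
set sK := \big[Rplus/0]_(j < m) ((G j + gamma j * D) * norm (vsub (lam j t.+1) th)).
set sg := \big[Rplus/0]_(j < m) (gamma j * norm (vsub (lam j t.+1) l) ^ 2).
set sLx := \big[Rplus/0]_(j < m) Lag_i (f j) (A j) (b j) (gamma j) (x j) th.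
set sLxs := \big[Rplus/0]_(j < m) Lag_i (f j) (A j) (b j) (gamma j) (xs j t.+1) l.
field; lra.
Qed.
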